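(* Let $\mathcal Q$ be the set of infinite arrays $q^\infty=(q(b:\cdot))_{b\ge1}$ of coefficient families satisfying the backward recursions (BR) for all $b$ and having $q(2:1)>0$. For $q^\infty\in\mathcal Q$, let $p_{q^\infty}$ be the EPPF of the final partition $(E_n)_{n\ge1}$ associated with the consistent freeze-and-merge operators defined by $q^\infty$. Equivalently, $p_{q^\infty}$ is the EPPF of the exchangeable random partition of $\mathbb N$ satisfying Möhle's recursion with coefficients $q(n:\cdot)$ for all $n$. Then the map $q^\infty\mapsto p_{q^\infty}$ is injective on $\mathcal Q$, hence a bijection onto its image.
   Context: Coefficient families. $q(1:\cdot)=\{q(1:1)\}=\{1\}$. For $b\ge2$, a coefficient family $q(b:\cdot)$ is a collection of nonnegative reals consisting of: - a number $q(b:1)$; - a number $q(b:k_1,\dots,k_r;s)$ for each multiset $\{k_1,\dots,k_r\}$ with $r\ge1$, $k_i\ge2$, $s=b-\sum k_i\ge0$; such that all these numbers sum to $1$. Backward recursions (BR). The first recursion holds for all $b\ge2$, with $l_j=\#\{i:k_i=j\}$ and the $q(b+1:\dots,2;s-1)$ term read as $0$ if $s=0$: $$\begin{aligned}q(b:k_1,\dots,k_r;s)={}&\sum_{i=1}^r\frac{(k_i+1)(l_{k_i+1}+1)}{(b+1)l_{k_i}}q(b+1:k_1,\dots,k_i+1,\dots,k_r;s)+\frac{2(l_2+1)}{b+1}q(b+1:k_1,\dots,k_r,2;s-1)\\&+\frac{s+1}{b+1}q(b+1:k_1,\dots,k_r;s+1)+\frac{q(b+1:1)+2q(b+1:2;b-1)}{b+1}q(b:k_1,\dots,k_r;s).\end{aligned}$$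 The second recursion holds for all $b\ge1$: $$q(b:1)=\frac b{b+1}q(b+1:1)+\frac{q(b+1:1)+2q(b+1:2;b-1)}{b+1}q(b:1).$$ Partitions and EPPF. A partition of a finite set is an unordered collection of nonempty pairwise disjoint blocks with union the set. A composition of $m$ is a sequence of positive integers summing to $m$, and $\mathcal C_m$ is the set of compositions of $m$. An exchangeable random partition of $\mathbb N$ is a sequence $(\Pi_n)$ of random partitions $\Pi_n$ of $[n]=\{1,\dots,n\}$, each with law invariant under permutations of $[n]$, such that $\Pi_n$ restricted to $[m]$ equals $\Pi_m$. Its EPPF $p$ on $\bigcup_m\mathcal C_m$ is defined by $\mathbb P(\Pi_m=\{A_1,\dots,A_\ell\})=p(|A_1|,\dots,|A_\ell|)$. Collisions. For integers $b\ge2$, $r\ge1$, $k_1,\dots,k_r\ge2$, $s\ge0$ with $s+\sum k_i=b$, a $(b;k_1,\dots,k_r;s)$-collision of $b$ blocks leaves $s$ blocks unchanged and divides the others into $r$ unordered groups of $k_1,\dots,k_r$ blocks, each merged into one block. Their number is $d(b;k_1,\dots,k_r;s)=\frac{b!}{s!\prod_{j=2}^b(j!)^{l_j}l_j!}$. Freeze-and-merge operators. A partially frozen partition of $[m]$ is a partition of $[m]$ whose blocks are each labeled ''active'' or ''frozen''. $\Sigma^*_m$ is the all-singletons, all-active partition of $[m]$. $\mathrm{FM}_m$ acts on a partially frozen partition with $b$ active blocks as follows. If $b=0$, it does nothing. Otherwise: - with probability $q(b:k_1,\dots,k_r;s)$, a uniformly chosen one of the $d(b;k_1,\dots,k_r;s)$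 possible $(b;k_1,\dots,k_r;s)$-collisions of the active blocks is performed, the merged blocks being active; - with probability $q(b:1)$, a uniformly chosen active block is frozen. The $\mathrm{FM}_n$-chain started from $\Sigma^*_n$ a.s. ends in an all-frozen state, whose induced (unlabeled) partition is $E_n$. *)

From HB Require Import structures.
From mathcomp Require Import all_boot all_order all_algebra.
Set Implicit Arguments. Unset Strict Implicit. Unset Printing Implicit Defensive.
Import Order.TTheory GRing.Theory Num.Theory.

(* valid b ks : ks is (the sorted form of) a multiset with r >= 1,
   k_i >= 2 and s = b - sum k_i >= 0. *)
Definition valid (b : nat) (ks : seq nat) : bool :=
  [&& sorted leq ks, all (fun k => 1 < k) ks, 0 < size ks & sumn ks <= b].

(* all sequences of length <= n with entries < m (duplicate-free) *)
Fixpoint seqs (n m : nat) : seq (seq nat) :=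
  if n is n'.+1 then [::] :: [seq x :: s | x <- iota 0 m, s <- seqs n' m]
  else [:: [::]].

Definition msets (b : nat) : seq (seq nat) := [seq ks <- seqs b b.+1 | valid b ks].

Definition incr (ks : seq nat) (i : nat) : seq nat :=
  sort leq (set_nth 0 ks i (nth 0 ks i).+1).

(* q1 b = q(b:1);  qc b ks = q(b:k_1,...,k_r; b - sum k_i)  (ks sorted). *)
Record qarr (R : realFieldType) := QArr {
  q1 : nat -> R;
  qc : nat -> seq nat -> R }.

Local Open Scope ring_scope.

Definition coef_family (R : realFieldType) (Q : qarr R) (b : nat) : Prop :=
  [/\ 0 <= q1 Q b, (forall ks, valid b ks -> 0 <= qc Q b ks) &
      q1 Q b + \sum_(ks <- msets b) qc Q b ks = 1].

Definition count_eq (ks : seq nat) (j : nat) : nat := count (pred1 j) ks.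

Definition BR1 (R : realFieldType) (Q : qarr R) (b : nat) (ks : seq nat) : Prop :=
  let s := (b - sumn ks)%N in
  qc Q b ks =
    \sum_(i < size ks)
       ((((nth 0 ks i).+1 * (count_eq ks (nth 0 ks i).+1).+1)%N)%:R
         / ((b.+1)%:R * (count_eq ks (nth 0 ks i))%:R))
       * qc Q b.+1 (incr ks i)
  + (2 * (count_eq ks 2).+1)%N%:R / (b.+1)%:R
       * (if s is 0 then 0 else qc Q b.+1 (2 :: ks))
  + (s.+1)%:R / (b.+1)%:R * qc Q b.+1 ks
  + (q1 Q b.+1 + 2%:R * qc Q b.+1 [:: 2]) / (b.+1)%:R * qc Q b ks.

Definition BR2 (R : realFieldType) (Q : qarr R) (b : nat) : Prop :=
  q1 Q b = b%:R / (b.+1)%:R * q1 Q b.+1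
           + (q1 Q b.+1 + 2%:R * qc Q b.+1 [:: 2]) / (b.+1)%:R * q1 Q b.

Definition inQ (R : realFieldType) (Q : qarr R) : Prop :=
  [/\ q1 Q 1 = 1,
      (forall b, (2 <= b)%N -> coef_family Q b),
      (forall b ks, (2 <= b)%N -> valid b ks -> BR1 Q b ks),
      (forall b, (1 <= b)%N -> BR2 Q b) &
      0 < q1 Q 2].

(* the (b; ks; s)-collisions of b (indexed) active blocks: set partitions of
   'I_b whose blocks of size >= 2 have sizes given by the multiset ks *)
Definition colls (b : nat) (ks : seq nat) : {set {set {set 'I_b}}} :=
  [set P : {set {set 'I_b}} | partition P [set: 'I_b] &
     sort leq (map (fun B : {set 'I_b} => #|B|)
                   (filter (fun B : {set 'I_b} => (1 < #|B|)%N) (enum P))) == ks].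

Definition merge n b (A : seq {set 'I_n}) (P : {set {set 'I_b}}) : seq {set 'I_n} :=
  map (fun B : {set 'I_b} => \bigcup_(i in B) nth set0 A (nat_of_ord i)) (enum P).

Definition rem_nth T (A : seq T) (i : nat) : seq T := take i A ++ drop i.+1 A.

Definition blocks n (A : seq {set 'I_n}) : {set {set 'I_n}} :=
  [set B : {set 'I_n} | B \in A].

(* fm_law fuel A Fz pi = probability that the FM_n-chain started from the
   partially frozen partition with active blocks A and frozen blocks Fz ends
   in the (unlabelled) partition pi. *)
Fixpoint fm_law (R : realFieldType) (n : nat) (Q : qarr R) (fuel : nat)
    (A Fz : seq {set 'I_n}) (pi : {set {set 'I_n}}) {struct fuel} : R :=
  match fuel with
  | 0 => if blocks (A ++ Fz) == pi then 1 else 0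
  | f.+1 =>
    if A is [::] then (if blocks Fz == pi then 1 else 0) else
    let b := size A in
      \sum_(ks <- msets b)
          qc Q b ks * ((\sum_(P in colls b ks) fm_law Q f (merge A P) Fz pi)
                        / (#|colls b ks|)%:R)
    + q1 Q b * ((\sum_(i < b)
                   fm_law Q f (rem_nth A i) (nth set0 A i :: Fz) pi) / b%:R)
  end.

Definition law_E (R : realFieldType) (Q : qarr R) (n : nat) (pi : {set {set 'I_n}}) : R :=
  fm_law Q n [seq [set i] | i <- enum 'I_n] [::] pi.

Definition canon (c : seq nat) : {set {set 'I_(sumn c)}} :=
  [set [set i : 'I_(sumn c) | (sumn (take j c) <= i < sumn (take j.+1 c))%N]
     | j : 'I_(size c)].

Definition eppf (R : realFieldType) (Q : qarr R) (c : seq nat) : R :=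
  law_E Q (canon c).

From Pilot Require Import Defs.
From HB Require Import structures.
From mathcomp Require Import all_boot all_order all_algebra.
From mathcomp Require Import zify.
Set Implicit Arguments. Unset Strict Implicit. Unset Printing Implicit Defensive.
Import Order.TTheory GRing.Theory Num.Theory.

(* By induction on the level n, the family q(n:.) is determined by the EPPF
   once the families of all levels m < n are.  For a composition c of n,
   decompose P(E_n = canon c) according to the first step of the FM_n-chain
   started from n active singletons: either a collision of some type ks, or
   the freezing of a block; in both cases fewer than n blocks remain active,
   so the continuation only involves levels < n.  Equal EPPFs thus give
     sum_ks (q(n:ks) - q'(n:ks)) X_c(ks) + (q(n:1) - q'(n:1)) T_c = 0.
   Since blocks only grow, X_c(ks) vanishes unless some collision of type ks
   refines the interval partition of type c; counting blocks, this forces the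
   defect sum ks - |ks| to be at most that of the non-singleton parts of c,
   with equality only for that very type.  Taking c = (1,...,1) isolates the
   freezing coefficient (T_c > 0 because q(m:1) > 0 at every level, by BR2);
   taking c = ks followed by singletons isolates q(n:ks), by induction on the
   defect of ks. *)

Lemma valid_size_lt_sumn b ks : valid b ks -> (size ks < sumn ks)%N.
Proof.
case/and4P=> _ ks_gt1 sz_gt0 _.
have two_size : (2 * size ks <= sumn ks)%N.
  elim: ks ks_gt1 {sz_gt0} => [|k ks IH] //= /andP [k_gt1 /IH le].
  by rewrite mulnS leq_add.
by apply: leq_trans two_size; rewrite mul2n -addnn -addn1 leq_add2l.
Qed.

Lemma valid_ge2 b ks : valid b ks -> (2 <= b)%N.
Proof.
move=> v; have lt := valid_size_lt_sumn v; case/and4P: v => _ _ sz_gt0 le_b.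
exact: leq_trans (leq_ltn_trans sz_gt0 lt) le_b.
Qed.

Lemma mem_seqs n m s :
  (size s <= n)%N -> all (fun x => x < m)%N s -> s \in seqs n m.
Proof.
elim: n s => [|n IH] [|x s] //=; rewrite ?inE // ltnS => sz /andP [x_lt s_lt].
apply/orP; right; apply: (allpairs_f (fun x s => x :: s)); last exact: IH.
by rewrite mem_iota.
Qed.

Lemma mem_msets b ks : (ks \in msets b) = valid b ks.
Proof.
rewrite mem_filter andb_idr // => v; have lt := valid_size_lt_sumn v.
have le_b : (sumn ks <= b)%N by case/and4P: v.
apply: mem_seqs; first exact: leq_trans (ltnW lt) le_b.
apply/allP => x x_in; rewrite ltnS; apply: leq_trans le_b.
by rewrite (perm_sumn (perm_to_rem x_in)) /= leq_addr.
Qed.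

(* In a list of positive integers, the parts equal to 1 contribute equally
   to the length and to the sum. *)
Lemma size_sumn_big_parts (s : seq nat) : all (fun x => 0 < x)%N s ->
  (size s + sumn [seq x <- s | 1 < x] = sumn s + size [seq x <- s | 1 < x])%N.
Proof.
elim: s => [|x s IH] //= /andP [x_gt0 /IH {}IH].
case: ifP => /= [_|]; first lia.
by move/negbT; rewrite -leqNgt => x_le1; rewrite (@anti_leq x 1) ?x_le1 //; lia.
Qed.

Lemma card_colls b ks (P : {set {set 'I_b}}) :
  P \in colls b ks -> (#|P| + sumn ks = b + size ks)%N.
Proof.
rewrite inE => /andP [partP /eqP <-]; set s := [seq #|B| | B : {set 'I_b} <- enum P].
have sum_s : sumn s = b.
  by rewrite /s sumnE big_map big_enum -(card_partition partP) cardsT card_ord.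
have s_gt0 : all (fun x => 0 < x)%N s.
  apply/allP => _ /mapP [B B_in ->]; rewrite card_gt0.
  by apply: contraTneq B_in => ->; rewrite mem_enum; case/and3P: partP.
rewrite size_sort (perm_sumn (permEl (perm_sort _ _))) -filter_map -/s.
by rewrite -[in RHS]sum_s -size_sumn_big_parts // size_map cardE.
Qed.

Lemma card_colls_lt b ks (P : {set {set 'I_b}}) :
  valid b ks -> P \in colls b ks -> (#|P| < b)%N.
Proof.
move=> v /card_colls cardP; have := valid_size_lt_sumn v.
by rewrite -(ltn_add2l #|P|) cardP ltn_add2r.
Qed.

(* The defect sum ks - |ks| of a collision type is the number of blocks it
   removes; it is the induction measure of the main argument. *)
Definition defect (ks : seq nat) : nat := (sumn ks - size ks)%N.

Lemma card_colls_defect b ks (P : {set {set 'I_b}}) :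
  valid b ks -> P \in colls b ks -> (#|P| + defect ks = b)%N.
Proof. by move=> /valid_size_lt_sumn lt /card_colls; rewrite /defect; lia. Qed.

Lemma size_le_sumn (s : seq nat) : all (fun x => 0 < x)%N s -> (size s <= sumn s)%N.
Proof. by elim: s => //= x s IH /andP [x_gt0 /IH le]; rewrite -add1n leq_add. Qed.

Lemma size_defect c : all (fun x => 0 < x)%N c ->
  (size c + defect (sort leq [seq x <- c | 1 < x]) = sumn c)%N.
Proof.
move=> c_gt0; have := size_sumn_big_parts c_gt0; set big := [seq x <- c | _].
have : (size big <= sumn big)%N.
  by apply: size_le_sumn; apply/allP => x; rewrite mem_filter => /andP [/ltnW].
rewrite /defect size_sort (perm_sumn (permEl (perm_sort _ _))); lia.
Qed.

Lemma refine_card (T : finType) (P Pi : {set {set T}}) :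
  partition P [set: T] -> partition Pi [set: T] ->
  (forall B, B \in P -> exists2 C, C \in Pi & B \subset C) ->
  (#|Pi| <= #|P|)%N /\ ((#|P| <= #|Pi|)%N -> P = Pi).
Proof.
case/and3P=> /eqP covP trP P0; case/and3P=> /eqP covPi trPi Pi0 refines.
pose g (B : {set T}) := \bigcup_(x in B) pblock Pi x.
have g_sub B C : B \in P -> C \in Pi -> B \subset C -> g B = C.
  move=> BP CPi BC; apply/setP => y; apply/bigcupP/idP.
    by case=> x xB; rewrite (def_pblock trPi CPi (subsetP BC x xB)).
  move=> yC; have /set0Pn [x xB] : B != set0 by apply: contraNneq P0 => <-.
  by exists x => //; rewrite (def_pblock trPi CPi (subsetP BC x xB)).
have pblockP x : pblock P x \in P by apply: pblock_mem; rewrite covP inE.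
have mem_pblockP x : x \in pblock P x by rewrite mem_pblock covP inE.
have g_pblock C x : C \in Pi -> x \in C -> g (pblock P x) = C.
  move=> CPi xC; have [C' C'Pi sub] := refines _ (pblockP x).
  rewrite (g_sub _ C' (pblockP x) C'Pi sub) -(def_pblock trPi CPi xC).
  by rewrite (def_pblock trPi C'Pi (subsetP sub x (mem_pblockP x))).
have img : g @: P = Pi.
  apply/setP => C; apply/imsetP/idP.
    by case=> B BP ->; have [C' C'Pi sub] := refines _ BP; rewrite (g_sub _ _ BP C'Pi sub).
  move=> CPi; have /set0Pn [x xC] : C != set0 by apply: contraNneq Pi0 => <-.
  by exists (pblock P x) => //; rewrite (g_pblock C x CPi xC).
have le_card : (#|Pi| <= #|P|)%N by rewrite -img leq_imset_card.
split=> // ge_card.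
have g_inj : {in P &, injective g} by apply/imset_injP; rewrite img eqn_leq le_card.
have subP : P \subset Pi.
  apply/subsetP => B BP; have [C CPi BC] := refines _ BP; suff -> : B = C by [].
  apply/eqP; rewrite eqEsubset BC; apply/subsetP => x xC.
  have := g_pblock C x CPi xC; rewrite -(g_sub _ _ BP CPi BC) => /g_inj.
  by move=> <- //; apply: pblockP.
by apply/eqP; rewrite eqEcard subP.
Qed.

(* The interval partition of 'I_b with consecutive blocks of sizes c: block j
   is [cut c j, cut c j.+1), where cut c j is the sum of the first j parts.
   The partition canon c underlying the EPPF is intervals (sum c) c. *)
Definition cut (c : seq nat) (j : nat) : nat := sumn (take j c).
Definition interval b (c : seq nat) (j : nat) : {set 'I_b} :=
  [set i : 'I_b | cut c j <= i < cut c j.+1]%N.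
Definition intervals b (c : seq nat) : {set {set 'I_b}} :=
  [set interval b c j | j : 'I_(size c)].

Lemma cut_mono c : {homo cut c : j j' / j <= j'}%N.
Proof. by rewrite /cut => j j' le; rewrite -(subnKC le) takeD sumn_cat leq_addr. Qed.

Lemma cutS c j : (j < size c)%N -> cut c j.+1 = (cut c j + nth 0 c j)%N.
Proof. by move=> lt; rewrite /cut (take_nth 0 lt) -cats1 sumn_cat /= addn0. Qed.

Lemma cut_le_sumn c j : (cut c j <= sumn c)%N.
Proof. by rewrite /cut -{2}(cat_take_drop j c) sumn_cat leq_addr. Qed.

Lemma cut_cover c i :
  (i < sumn c)%N -> exists2 j, (j < size c)%N & (cut c j <= i < cut c j.+1)%N.
Proof.
rewrite /cut; elim: c i => [|x c IH] i //= lt_i.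
case: (ltnP i x) => [lt_ix|le_xi]; first by exists 0%N; rewrite //= take0 addn0.
have [j lt_j /andP [lo hi]] : exists2 j, (j < size c)%N &
    (sumn (take j c) <= i - x < sumn (take j.+1 c))%N.
  by apply: IH; rewrite ltn_subLR.
by exists j.+1 => //=; rewrite -leq_subRL // -ltn_subLR // lo.
Qed.

Lemma cut_uniq c i j j' :
  (cut c j <= i < cut c j.+1)%N -> (cut c j' <= i < cut c j'.+1)%N -> j = j'.
Proof.
move=> /andP [lo hi] /andP [lo' hi']; apply/eqP; rewrite eqn_leq.
apply/andP; split; rewrite leqNgt; apply/negP => lt.
  by have := leq_trans (cut_mono c lt) lo; rewrite leqNgt hi'.
by have := leq_trans (cut_mono c lt) lo'; rewrite leqNgt hi.
Qed.

Lemma card_interval_nat N a h : (a <= h <= N)%N ->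
  #|[set i : 'I_N | a <= i < h]%N| = (h - a)%N.
Proof.
case/andP=> le_ah le_hN; rewrite -sum1_card.
rewrite (eq_bigl (fun i : 'I_N => a <= i < h)%N); last by move=> i; rewrite inE.
rewrite -(big_mkord (fun i => a <= i < h)%N (fun _ => 1%N)) big_mkcond /=.
rewrite (@big_cat_nat _ _ _ a) ?(leq_trans le_ah le_hN) //=.
rewrite (@big_cat_nat _ _ _ h a N) //=.
rewrite (@eq_big_nat _ _ _ 0 a _ (fun _ => 0%N)); last first.
  by move=> i /andP [_ lt]; rewrite leqNgt lt.
rewrite (@eq_big_nat _ _ _ a h _ (fun _ => 1%N)); last by move=> i ->.
rewrite (@eq_big_nat _ _ _ h N _ (fun _ => 0%N)); last first.
  by move=> i /andP [ge _]; rewrite ltnNge ge andbF.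
by rewrite !sum_nat_const_nat !muln0 muln1 add0n addn0.
Qed.

Section Intervals.
Variables (b : nat) (c : seq nat).
Hypotheses (sum_c : sumn c = b) (c_gt0 : all (fun x => 0 < x)%N c).

Lemma cut_lt j : (j < size c)%N -> (cut c j < cut c j.+1)%N.
Proof.
by move=> lt; rewrite cutS // -[X in (X < _)%N]addn0 ltn_add2l (allP c_gt0) ?mem_nth.
Qed.

Lemma cut_lt_b j : (j < size c)%N -> (cut c j < b)%N.
Proof. by move=> lt; rewrite -sum_c; apply: leq_trans (cut_lt lt) (cut_le_sumn _ _). Qed.

Lemma cut_in_interval j (lt : (j < size c)%N) : Ordinal (cut_lt_b lt) \in interval b c j.
Proof. by rewrite inE /= leqnn cut_lt. Qed.

Lemma card_interval j : (j < size c)%N -> #|interval b c j| = nth 0 c j.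
Proof.
move=> lt; rewrite card_interval_nat ?cutS ?addKn // leq_addr -cutS // -sum_c.
exact: cut_le_sumn.
Qed.

Lemma interval_inj : injective (fun j : 'I_(size c) => interval b c j).
Proof.
move=> j j' /= E; apply: val_inj; have := cut_in_interval (ltn_ord j).
by rewrite E inE => in_j'; apply/esym/(cut_uniq in_j'); rewrite /= leqnn cut_lt.
Qed.

Lemma card_intervals : #|intervals b c| = size c.
Proof. by rewrite card_imset ?card_ord //; apply: interval_inj. Qed.

Lemma intervals_partition : partition (intervals b c) [set: 'I_b].
Proof.
apply/and3P; split.
- apply/eqP/setP => i; rewrite inE; apply/bigcupP.
  have [j lt_j i_in] : exists2 j, (j < size c)%N & (cut c j <= i < cut c j.+1)%N.
    by apply: cut_cover; rewrite sum_c.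
  by exists (interval b c j); [apply/imsetP; exists (Ordinal lt_j) | rewrite inE].
- apply/trivIsetP => _ _ /imsetP [j1 _ ->] /imsetP [j2 _ ->] neq.
  rewrite -setI_eq0; apply/eqP/setP => i; rewrite !inE; apply/negbTE/andP.
  by case=> /cut_uniq in1 /in1 eq12; rewrite eq12 eqxx in neq.
- by apply/imsetP => -[j _ E]; have := cut_in_interval (ltn_ord j); rewrite -E inE.
Qed.

Lemma intervals_type :
  sort leq [seq #|B| | B : {set 'I_b} <- enum (intervals b c) & (1 < #|B|)%N] =
  sort leq [seq x <- c | (1 < x)%N].
Proof.
apply/(perm_sortP leq_total leq_trans anti_leq).
pose Is := [seq interval b c j | j : 'I_(size c) <- enum 'I_(size c)].
have enumE : perm_eq (enum (intervals b c)) Is.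
  apply: uniq_perm; rewrite ?enum_uniq ?(map_inj_uniq interval_inj) ?enum_uniq //.
  by move=> B; rewrite mem_enum; apply/imsetP/mapP => -[j _ ->]; exists j; rewrite ?mem_enum.
have cE : c = [seq #|B| | B : {set 'I_b} <- Is].
  rewrite -map_comp (eq_map (g := fun j : 'I_(size c) => nth 0 c j)); last first.
    by move=> j /=; rewrite card_interval.
  by rewrite (map_comp (nth 0 c) val) val_enum_ord -/(mkseq _ _) mkseq_nth.
by rewrite -filter_map {2}cE; apply: perm_filter; apply: perm_map.
Qed.

End Intervals.

Local Open Scope ring_scope.

Lemma q1_ge0 (R : realFieldType) (Q : qarr R) m :
  inQ Q -> (1 <= m)%N -> 0 <= q1 Q m.
Proof.
case=> q11 family _ _ _; case: m => [|[|m]] // _; first by rewrite q11.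
by case: (family m.+2 isT).
Qed.

Lemma qc_ge0 (R : realFieldType) (Q : qarr R) m ks :
  inQ Q -> ks \in msets m -> 0 <= qc Q m ks.
Proof.
case=> _ family _ _ _; rewrite mem_msets => v.
by case: (family m (valid_ge2 v)) => _ /(_ ks v).
Qed.

(* The freezing probabilities are positive at every level: by BR2,
   q(b:1) > 0 forces q(b+1:1) > 0, since q(b+1:2;b-1) <= 1 < (b+1)/2. *)
Lemma q1_gt0 (R : realFieldType) (Q : qarr R) m : inQ Q -> (1 <= m)%N -> 0 < q1 Q m.
Proof.
move=> HQ; case: (HQ) => q11 family _ BR2Q q21.
elim: m => [|[|[|m]]] // IH _; first by rewrite q11 ltr01.
have q1m_gt0 := IH isT; rewrite lt0r q1_ge0 // andbT; apply/eqP => q1_0.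
have q2_le1 : qc Q m.+3 [:: 2%N] <= 1.
  have [_ qc_ge0' <-] := family m.+3 isT.
  have mem2 : [:: 2%N] \in msets m.+3 by rewrite mem_msets.
  rewrite q1_0 add0r (big_rem _ mem2) /= lerDl big_seq.
  by apply: sumr_ge0 => ks /mem_rem; rewrite mem_msets; apply: qc_ge0'.
have := BR2Q m.+2 isT; rewrite /BR2 q1_0 mulr0 !add0r => q1E.
suff : q1 Q m.+2 < q1 Q m.+2 by rewrite ltxx.
rewrite {1}q1E -[X in _ < X]mul1r ltr_pM2r // ltr_pdivrMr ?ltr0n // mul1r.
by apply: le_lt_trans (_ : 2%:R * 1 < _); rewrite ?ler_pM2l ?ltr0n // mulr1 ltr_nat.
Qed.

Lemma size_merge n m (A : seq {set 'I_n}) (P : {set {set 'I_m}}) :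
  size (Defs.merge A P) = #|P|.
Proof. by rewrite size_map -cardE. Qed.

Lemma size_rem_nth (T : Type) (A : seq T) i :
  (i < size A)%N -> size (rem_nth A i) = (size A).-1.
Proof. by move=> lt; rewrite size_cat size_take size_drop lt; lia. Qed.

Lemma mem_rem_nth (T : eqType) (A Fz : seq T) i x0 x : (i < size A)%N ->
  (x \in rem_nth A i ++ nth x0 A i :: Fz) = (x \in A ++ Fz).
Proof.
move=> lt; rewrite /rem_nth -[in RHS](cat_take_drop i A) (drop_nth x0 lt).
by rewrite !mem_cat !inE -!orbA; congr orb; apply: orbCA.
Qed.

Lemma blocks_freeze n (A Fz : seq {set 'I_n}) i : (i < size A)%N ->
  blocks (rem_nth A i ++ nth set0 A i :: Fz) = blocks (A ++ Fz).
Proof. by move=> lt; apply/setP => X; rewrite !inE mem_rem_nth. Qed.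

Definition agree_at (R : realFieldType) (Q Q' : qarr R) (m : nat) : Prop :=
  q1 Q m = q1 Q' m /\ (forall ks, valid m ks -> qc Q m ks = qc Q' m ks).

Section FreezeAndMerge.
Variables (R : realFieldType) (n : nat).
Implicit Types (Q : qarr R) (A Fz : seq {set 'I_n}) (pi : {set {set 'I_n}}).

Lemma fm_lawS Q f A Fz pi : A != [::] ->
  fm_law Q f.+1 A Fz pi =
   \sum_(ks <- msets (size A)) qc Q (size A) ks *
       ((\sum_(P in colls (size A) ks) fm_law Q f (Defs.merge A P) Fz pi)
          / (#|colls (size A) ks|)%:R)
   + q1 Q (size A) * ((\sum_(i < size A)
         fm_law Q f (rem_nth A i) (nth set0 A i :: Fz) pi) / (size A)%:R).
Proof. by case: A. Qed.

Lemma fm_law_ge0 Q f A Fz pi : inQ Q -> 0 <= fm_law Q f A Fz pi.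
Proof.
move=> HQ; elim: f A Fz => [|f IH] [|a A] Fz; try by rewrite /=; case: ifP.
rewrite fm_lawS //; apply: addr_ge0.
  rewrite big_seq; apply: sumr_ge0 => ks ks_in; rewrite mulr_ge0 ?qc_ge0 //.
  by rewrite divr_ge0 ?sumr_ge0.
by rewrite mulr_ge0 ?q1_ge0 ?divr_ge0 ?sumr_ge0.
Qed.

(* Coefficients at levels <= N determine the law of the chain from any
   state with at most N active blocks, as the number of active blocks never
   increases. *)
Lemma fm_law_agree (Q Q' : qarr R) N f A Fz pi :
  (forall m, (1 <= m <= N)%N -> agree_at Q Q' m) ->
  (size A <= N)%N -> fm_law Q f A Fz pi = fm_law Q' f A Fz pi.
Proof.
move=> agree; elim: f A Fz => [|f IH] [|a A] Fz // le_N.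
rewrite !fm_lawS //; set A' := a :: A.
have [q1E qcE] := agree (size A') le_N.
rewrite q1E; congr (_ + _ * (_ / _)); last first.
  by apply: eq_bigr => i _; rewrite IH // size_rem_nth // (leq_trans _ le_N).
apply: eq_big_seq => ks; rewrite mem_msets => v; rewrite qcE //.
congr (_ * (_ / _)); apply: eq_bigr => P P_in; apply: IH.
by rewrite size_merge (leq_trans _ le_N) // ltnW // (card_colls_lt v).
Qed.

(* Blocks only grow along the chain: if a current block lies in no block of
   pi, the chain ends in pi with probability 0. *)
Lemma fm_law_support Q f A Fz pi (x : {set 'I_n}) :
  x \in A ++ Fz -> (forall y, y \in pi -> ~~ (x \subset y)) ->
  fm_law Q f A Fz pi = 0.
Proof.
elim: f A Fz x => [|f IH] [|a A] Fz x x_in x_out;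
  try by move: x_in x_out; rewrite /=; case: ifP => // /eqP <- x_in /(_ x);
         rewrite /blocks in_set x_in subxx => /(_ isT).
rewrite fm_lawS //; set A' := a :: A.
rewrite big1_seq ?add0r; last first.
  move=> ks _; rewrite big1 ?mul0r ?mulr0 // => P; rewrite inE => /andP [partP _].
  move: x_in; rewrite mem_cat => /orP [xA|xF]; last first.
    by apply: (IH _ _ x) => //; rewrite mem_cat xF orbT.
  have ix : (index x A' < size A')%N by rewrite index_mem.
  have /bigcupP [B BP ixB] : Ordinal ix \in cover P.
    by case/and3P: partP => /eqP -> _ _; rewrite inE.
  pose X := \bigcup_(j in B) nth set0 A' j.
  have sub_xX : x \subset X.
    have := @bigcup_sup _ _ (Ordinal ix) (mem B) (fun j : 'I_(size A') => nth set0 A' j) ixB.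
    by rewrite /= nth_index.
  apply: (IH _ _ X); first by rewrite mem_cat map_f ?mem_enum.
  by move=> y /x_out; apply: contra; apply: subset_trans.
rewrite big1 ?mul0r ?mulr0 // => i _.
by apply: (IH _ _ x) => //; rewrite mem_rem_nth.
Qed.

(* Freezing the active blocks one at a time keeps the current partition,
   which is thus reached with positive probability. *)
Lemma fm_law_gt0 Q f A Fz pi : inQ Q -> pi = blocks (A ++ Fz) ->
  0 < fm_law Q f A Fz pi.
Proof.
move=> HQ; elim: f A Fz => [|f IH] [|a A] Fz pi_E; try by rewrite /= -pi_E eqxx.
rewrite fm_lawS //; set A' := a :: A.
apply: ltr_pwDr.
  rewrite mulr_gt0 ?q1_gt0 // divr_gt0 // big_ord_recl ltr_pwDl //.
    by apply: IH; rewrite blocks_freeze.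
  by apply: sumr_ge0 => i _; apply: ltW; apply: IH; rewrite blocks_freeze.
rewrite big_seq; apply: sumr_ge0 => ks ks_in.
by rewrite mulr_ge0 ?qc_ge0 ?divr_ge0 ?sumr_ge0 // => P _; apply: fm_law_ge0.
Qed.

End FreezeAndMerge.

Notation singletons n := [seq [set i] | i <- enum 'I_n].

Lemma size_singletons n : size (singletons n) = n.
Proof. by rewrite size_map size_enum_ord. Qed.

Lemma ltn_singletons n (k : 'I_(size (singletons n))) : (k < n)%N.
Proof. by case: k => /= k; rewrite size_singletons. Qed.

Lemma nth_singletons n i (x : 'I_n) :
  (i < n)%N -> (x \in nth set0 (singletons n) i) = (val x == i).
Proof.
by move=> lt; rewrite (nth_map (Ordinal lt)) ?size_enum_ord // inE -val_eqE /= nth_enum_ord.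
Qed.

Lemma merge_singletons n (B : {set 'I_(size (singletons n))}) (x : 'I_n) :
  (x \in \bigcup_(k in B) nth set0 (singletons n) k) = [exists k in B, val k == val x].
Proof.
apply/bigcupP/existsP => [[k kB]|[k /andP [kB /eqP kx]]].
  by rewrite nth_singletons ?ltn_singletons // => /eqP xk; exists k; rewrite kB xk eqxx.
by exists k; rewrite // nth_singletons -?kx ?ltn_singletons.
Qed.

Lemma canon_merge_intervals c :
  canon c = blocks (Defs.merge (singletons (sumn c))
                               (intervals (size (singletons (sumn c))) c) ++ [::]).
Proof.
set N := sumn c; set S := singletons N.
have mergeE j : \bigcup_(k in interval (size S) c j) nth set0 S k = interval N c j.
  apply/setP => x; rewrite merge_singletons inE; apply/existsP/idP => [[k]|x_in].
    by rewrite inE => /andP [k_in /eqP <-].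
  have lt_x : (val x < size S)%N by rewrite /S size_singletons; apply: ltn_ord.
  by exists (Ordinal lt_x); rewrite inE /= x_in eqxx.
apply/setP => Y; rewrite inE cats0; apply/imsetP/mapP => [[j _ ->]|[B]].
  by exists (interval (size S) c j); rewrite ?mergeE // mem_enum imset_f.
by rewrite mem_enum => /imsetP [j _ ->] ->; exists j; rewrite ?mergeE.
Qed.

Lemma canon_ones n :
  canon (nseq n 1%N) = blocks (singletons (sumn (nseq n 1%N)) ++ [::]).
Proof.
have cutE j : (j <= n)%N -> cut (nseq n 1%N) j = j.
  by move=> le; rewrite /cut take_nseq // sumn_nseq mul1n.
have sumE : sumn (nseq n 1%N) = n by rewrite sumn_nseq mul1n.
have intervalE (j x : nat) :
    (j < n)%N -> (cut (nseq n 1%N) j <= x < cut (nseq n 1%N) j.+1)%N = (x == j).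
  by move=> lt; rewrite !cutE //; apply/idP/eqP; lia.
apply/setP => Y; rewrite inE cats0; apply/imsetP/mapP => [[j _ ->]|[x _ ->]].
  have lt_j : (val j < n)%N by case: j => /= j; rewrite size_nseq.
  have lt_j' : (val j < sumn (nseq n 1%N))%N by rewrite sumE.
  exists (Ordinal lt_j'); rewrite ?mem_enum //.
  by apply/setP => x; rewrite !inE intervalE // -val_eqE.
have lt_x : (val x < n)%N by case: x => /= x; rewrite sumE.
have lt_x' : (val x < size (nseq n 1%N))%N by rewrite size_nseq.
by exists (Ordinal lt_x') => //; apply/setP => y; rewrite !inE intervalE // -val_eqE.
Qed.

Section CollisionsOfSingletons.
Variables (R : realFieldType) (Q : qarr R) (f : nat) (c : seq nat).
Hypothesis c_gt0 : all (fun x => 0 < x)%N c.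
Let S := singletons (sumn c).

Lemma collision_refines (P : {set {set 'I_(size S)}}) :
  fm_law Q f (Defs.merge S P) [::] (canon c) != 0 ->
  forall B, B \in P -> exists2 C, C \in intervals (size S) c & B \subset C.
Proof.
move=> nz B BP; set X := \bigcup_(k in B) nth set0 S k.
have [/existsP [y /andP [y_in Xy]] | no_y] := boolP [exists y in canon c, X \subset y].
  have [j _ yE] := imsetP y_in.
  exists (interval (size S) c j); first exact: imset_f.
  apply/subsetP => k kB.
  have : Ordinal (ltn_singletons k) \in X.
    by rewrite merge_singletons; apply/existsP; exists k; rewrite kB /=.
  by move/(subsetP Xy); rewrite yE !inE.
case/eqP: nz; apply: (@fm_law_support _ _ Q f _ _ _ X).
  by rewrite cats0 map_f ?mem_enum.
by move=> y y_in; apply: contraNN no_y => Xy; apply/existsP; exists y; rewrite y_in.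
Qed.

Lemma collision_support (ks : seq nat) (P : {set {set 'I_(size S)}}) :
  P \in colls (size S) ks -> fm_law Q f (Defs.merge S P) [::] (canon c) != 0 ->
  (#|intervals (size S) c| <= #|P|)%N /\
  ((#|P| <= #|intervals (size S) c|)%N -> P = intervals (size S) c).
Proof.
rewrite inE => /andP [partP _] /collision_refines; apply: refine_card => //.
by apply: intervals_partition; rewrite // size_singletons.
Qed.

End CollisionsOfSingletons.

Section FirstStep.
Variables (R : realFieldType).
Implicit Types (Q : qarr R) (c ks : seq nat).

Notation S c := (singletons (sumn c)).

Definition collision_term Q c ks : R :=
  (\sum_(P in colls (size (S c)) ks)
      fm_law Q (sumn c).-1 (Defs.merge (S c) P) [::] (canon c))
  / (#|colls (size (S c)) ks|)%:R.

Definition freeze_term Q c : R :=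
  (\sum_(i < size (S c))
      fm_law Q (sumn c).-1 (rem_nth (S c) i) [:: nth set0 (S c) i] (canon c))
  / (size (S c))%:R.

Lemma eppf_first_step Q c : (0 < sumn c)%N ->
  eppf Q c = \sum_(ks <- msets (size (S c))) qc Q (size (S c)) ks * collision_term Q c ks
             + q1 Q (size (S c)) * freeze_term Q c.
Proof.
move=> sum_gt0; rewrite /eppf /law_E -[X in fm_law _ X](prednK sum_gt0) fm_lawS //.
by rewrite -size_eq0 size_singletons -lt0n.
Qed.

(* After the first step fewer than n blocks are active, so both terms only
   involve the coefficients of levels < n. *)
Lemma first_step_agree Q Q' c : (0 < sumn c)%N ->
  (forall m, (1 <= m < sumn c)%N -> agree_at Q Q' m) ->
  (forall ks, valid (size (S c)) ks -> collision_term Q c ks = collision_term Q' c ks)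
  /\ freeze_term Q c = freeze_term Q' c.
Proof.
move=> sum_gt0 agree.
have agree' m : (1 <= m <= (sumn c).-1)%N -> agree_at Q Q' m.
  by move=> m_in; apply: agree; lia.
have sizeS : (size (S c)).-1 = (sumn c).-1 by rewrite size_singletons.
split=> [ks v|].
  congr (_ / _); apply: eq_bigr => P P_in; apply: (fm_law_agree (N := (sumn c).-1)) => //.
  by rewrite size_merge -sizeS -ltnS prednK ?size_singletons ?(card_colls_lt v).
congr (_ / _); apply: eq_bigr => i _; apply: (fm_law_agree (N := (sumn c).-1)) => //.
by rewrite size_rem_nth // sizeS.
Qed.

Lemma collision_term_support Q c ks :
  all (fun x => 0 < x)%N c -> collision_term Q c ks != 0 ->
  exists2 P, P \in colls (size (S c)) ks &
    (#|intervals (size (S c)) c| <= #|P|)%N /\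
    ((#|P| <= #|intervals (size (S c)) c|)%N -> P = intervals (size (S c)) c).
Proof.
move=> c_gt0 nz; have [P P_in nzP] : exists2 P, P \in colls (size (S c)) ks &
    fm_law Q (sumn c).-1 (Defs.merge (S c) P) [::] (canon c) != 0.
  apply/exists_inP; apply: contraNT nz => /exists_inPn all0.
  by rewrite /collision_term big1 ?mul0r // => P /all0 /negPn /eqP.
exists P => //; exact: (collision_support c_gt0 P_in nzP).
Qed.

(* Write ks for the sorted non-singleton parts of c.  A collision type ks'
   can contribute to canon c only if its defect is smaller than that of ks,
   or ks' = ks: a contributing collision refines the interval partition of
   type c, whose block count size c = sum c - defect ks bounds its own. *)
Lemma collision_term_ne0 Q c ks' :
  all (fun x => 0 < x)%N c -> valid (size (S c)) ks' -> collision_term Q c ks' != 0 ->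
  (defect ks' < defect (sort leq [seq x <- c | 1 < x]%N))%N \/
  ks' = sort leq [seq x <- c | 1 < x]%N.
Proof.
move=> c_gt0 v /(collision_term_support c_gt0) [P P_in [le_P eq_P]].
have sumS : sumn c = size (S c) by rewrite size_singletons.
have cardP := card_colls_defect v P_in; have sizeE := size_defect c_gt0.
rewrite card_intervals // in le_P eq_P.
have [lt|ge] := ltnP (defect ks') (defect (sort leq [seq x <- c | 1 < x]%N)); [by left|right].
have {}eq_P : P = intervals (size (S c)) c by apply: eq_P; lia.
move: P_in; rewrite eq_P inE => /andP [_ /eqP <-].
by rewrite intervals_type.
Qed.

(* The collision producing the interval partition itself, followed by
   freezing, ends in canon c. *)
Lemma collision_term_gt0 Q c : inQ Q -> all (fun x => 0 < x)%N c ->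
  0 < collision_term Q c (sort leq [seq x <- c | 1 < x]%N).
Proof.
move=> HQ c_gt0; have sumS : sumn c = size (S c) by rewrite size_singletons.
have I_in : intervals (size (S c)) c \in colls (size (S c)) (sort leq [seq x <- c | 1 < x]%N).
  by rewrite inE intervals_partition // intervals_type // eqxx.
rewrite divr_gt0 // ?ltr0n ?card_gt0; last by apply/set0Pn; exists (intervals (size (S c)) c).
rewrite (bigD1 _ I_in) /= ltr_pwDl ?fm_law_gt0 ?canon_merge_intervals //.
by apply: sumr_ge0 => P _; apply: fm_law_ge0.
Qed.

End FirstStep.

Lemma big_seq_single (R : realFieldType) (T : eqType) (s : seq T) a (F : T -> R) :
  (forall x, x \in s -> x != a -> F x = 0) -> \sum_(x <- s) F x = (count_mem a s)%:R * F a.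
Proof.
elim: s => [|x s IH] F0; first by rewrite big_nil mul0r.
rewrite big_cons IH => [|y y_in]; last by apply: F0; rewrite inE y_in orbT.
have [-> | neq] := eqVneq x a; first by rewrite /= eqxx mulrSr mulrDl mul1r addrC.
by rewrite F0 ?mem_head // add0r /= (negbTE neq) add0n.
Qed.

Lemma sumr_ord_gt0 (R : realFieldType) m (F : 'I_m -> R) :
  (0 < m)%N -> (forall i, 0 < F i) -> 0 < \sum_(i < m) F i.
Proof.
case: m F => // m F _ F_gt0; rewrite big_ord_recl ltr_pwDl //.
by apply: sumr_ge0 => i _; apply: ltW.
Qed.

Section Identifiability.
Variables (R : realFieldType) (Q Q' : qarr R).
Hypotheses (HQ : inQ Q) (HQ' : inQ Q').
Hypothesis same_eppf : forall c, all (fun x => 0 < x)%N c -> eppf Q c = eppf Q' c.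

Notation S c := (singletons (sumn c)).

Lemma first_step_difference c : all (fun x => 0 < x)%N c -> (0 < sumn c)%N ->
  (forall m, (1 <= m < sumn c)%N -> agree_at Q Q' m) ->
  \sum_(ks <- msets (size (S c)))
     (qc Q (size (S c)) ks - qc Q' (size (S c)) ks) * collision_term Q c ks
  + (q1 Q (size (S c)) - q1 Q' (size (S c))) * freeze_term Q c = 0.
Proof.
move=> c_gt0 sum_gt0 agree; have [collE freezeE] := first_step_agree sum_gt0 agree.
set b := size (S c).
have sumE : \sum_(ks <- msets b) qc Q' b ks * collision_term Q' c ks =
            \sum_(ks <- msets b) qc Q' b ks * collision_term Q c ks.
  by apply: eq_big_seq => ks; rewrite mem_msets => v; rewrite collE.
have := same_eppf c_gt0; rewrite !eppf_first_step // -/b -freezeE sumE => eppfE.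
rewrite (eq_bigr (fun ks => qc Q b ks * collision_term Q c ks
                            - qc Q' b ks * collision_term Q c ks)).
  by rewrite sumrB mulrBl addrACA -opprD eppfE subrr.
by move=> ks _; rewrite mulrBl.
Qed.

(* Level n >= 2, freezing coefficient: for c = (1,...,1) no collision can
   contribute, while the freeze term is positive. *)
Lemma q1_agree n : (2 <= n)%N ->
  (forall m, (1 <= m < n)%N -> agree_at Q Q' m) -> q1 Q n = q1 Q' n.
Proof.
move=> n_ge2 agree; set c := nseq n 1%N.
have c_gt0 : all (fun x => 0 < x)%N c by apply/allP => x /nseqP [->].
have sum_c : sumn c = n by rewrite sumn_nseq mul1n.
have sizeS : size (S c) = n by rewrite size_singletons.
have freeze_gt0 : 0 < freeze_term Q c.
  apply: divr_gt0; last by rewrite ltr0n sizeS ltnW.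
  apply: sumr_ord_gt0 => [|i]; first by rewrite sizeS ltnW.
  by apply: fm_law_gt0 => //; rewrite blocks_freeze // /c canon_ones.
have no_big : sort leq [seq x <- c | 1 < x]%N = [::] by rewrite filter_nseq.
have collision0 ks : ks \in msets (size (S c)) -> collision_term Q c ks = 0.
  rewrite mem_msets => v; apply/eqP; apply: contraT => /(collision_term_ne0 c_gt0 v).
  by rewrite no_big => -[//|ks0]; move: v; rewrite ks0; case/and4P.
have sum_gt0 : (0 < sumn c)%N by rewrite sum_c ltnW.
have agree_c m : (1 <= m < sumn c)%N -> agree_at Q Q' m by rewrite sum_c; apply: agree.
have := first_step_difference c_gt0 sum_gt0 agree_c.
rewrite big1_seq ?add0r => [|ks /andP [_ ks_in]]; last by rewrite collision0 ?mulr0.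
by move/eqP; rewrite mulf_eq0 (gt_eqF freeze_gt0) orbF subr_eq0 sizeS => /eqP.
Qed.

(* Level n >= 2, collision coefficient of type ks, assuming agreement for
   all types of smaller defect: for c = ks followed by singletons only the
   type ks survives among the unknown differences, with a positive factor. *)
Lemma qc_agree n ks : (2 <= n)%N ->
  (forall m, (1 <= m < n)%N -> agree_at Q Q' m) -> q1 Q n = q1 Q' n ->
  (forall ks', valid n ks' -> (defect ks' < defect ks)%N -> qc Q n ks' = qc Q' n ks') ->
  valid n ks -> qc Q n ks = qc Q' n ks.
Proof.
move=> n_ge2 agree q1E lower v; have /and4P [ks_sorted ks_gt1 _ ks_le] := v.
set c := ks ++ nseq (n - sumn ks) 1%N.
have c_gt0 : all (fun x => 0 < x)%N c.
  rewrite all_cat (sub_all _ ks_gt1) => [|x]; last exact: ltnW.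
  by apply/allP => x /nseqP [->].
have sum_c : sumn c = n by rewrite sumn_cat sumn_nseq mul1n subnKC.
have sizeS : size (S c) = n by rewrite size_singletons.
have typeE : sort leq [seq x <- c | 1 < x]%N = ks.
  by rewrite filter_cat filter_nseq cats0 (all_filterP ks_gt1) sort_le_id.
have coll_gt0 := collision_term_gt0 HQ c_gt0; rewrite typeE in coll_gt0.
have only_ks ks' : ks' \in msets (size (S c)) -> ks' != ks ->
    (qc Q (size (S c)) ks' - qc Q' (size (S c)) ks') * collision_term Q c ks' = 0.
  rewrite mem_msets => v' neq; have [->|nz] := eqVneq (collision_term Q c ks') 0.
    by rewrite mulr0.
  have := collision_term_ne0 c_gt0 v' nz; rewrite typeE => -[lt|eq_ks].
    by rewrite sizeS lower ?subrr ?mul0r // -sizeS.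
  by rewrite eq_ks eqxx in neq.
have sum_gt0 : (0 < sumn c)%N by rewrite sum_c ltnW.
have agree_c m : (1 <= m < sumn c)%N -> agree_at Q Q' m by rewrite sum_c; apply: agree.
have := first_step_difference c_gt0 sum_gt0 agree_c.
rewrite sizeS q1E subrr mul0r addr0 -sizeS (big_seq_single only_ks) => /eqP.
have ks_in : (0 < count_mem ks (msets (size (S c))))%N.
  by rewrite -has_count has_pred1 mem_msets sizeS.
rewrite mulf_eq0 pnatr_eq0 eqn0Ngt ks_in /= mulf_eq0 (gt_eqF coll_gt0) orbF subr_eq0 sizeS.
by move/eqP.
Qed.

(* Level n is determined once all lower levels are: at level 1 by q(1:1) = 1,
   above by q1_agree and then qc_agree, by induction on the defect. *)
Lemma agree_level n : (1 <= n)%N ->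
  (forall m, (1 <= m < n)%N -> agree_at Q Q' m) -> agree_at Q Q' n.
Proof.
case: n => [|[|n]] // _ agree.
  by split=> [|ks /valid_ge2 //]; case: HQ => ->; case: HQ' => ->.
have q1E := q1_agree (isT : (2 <= n.+2)%N) agree; split=> //.
suff lt_defect k : forall ks,
    (defect ks < k)%N -> valid n.+2 ks -> qc Q n.+2 ks = qc Q' n.+2 ks.
  by move=> ks; apply: (lt_defect (defect ks).+1).
elim: k => // k IH ks lt_k v; apply: qc_agree => // ks' v' lt'.
by apply: IH v'; apply: leq_trans lt' _; rewrite -ltnS.
Qed.

End Identifiability.

Local Close Scope ring_scope.

Theorem lemma6p3 (R : realFieldType) (Q Q' : qarr R) :
  inQ Q -> inQ Q' ->
  (forall c : seq nat, all (fun x => 0 < x)%N c -> eppf Q c = eppf Q' c) ->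
  forall b : nat, (1 <= b)%N ->
    q1 Q b = q1 Q' b /\ (forall ks, valid b ks -> qc Q b ks = qc Q' b ks).
Proof.
move=> HQ HQ' same_eppf; elim/ltn_ind => b IH b_ge1.
apply: (agree_level HQ HQ' same_eppf b_ge1) => m /andP [m_ge1 lt_mb].
exact: IH.
Qed.
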